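(* Let $h^\star:\mathbb R\to[0,1]$ be non-decreasing. Let $A\subseteq B$ be finite multisets of real numbers, and let $k,\ell$ be integers with $k\le|A|$ and $k\le\ell\le|B|$. Let $A_k$ be the multiset of the $k$ largest elements of $A$ and $B_\ell$ the multiset of the $\ell$ largest elements of $B$. Then \[ 1-\prod_{r\in B_\ell}\big(1-h^\star(r)\big)\ge1-\prod_{r\in A_k}\big(1-h^\star(r)\big). \] *)

From mathcomp Require Import all_boot all_order all_algebra.
From mathcomp Require Import reals.
Set Implicit Arguments. Unset Strict Implicit. Unset Printing Implicit Defensive.
Import Order.TTheory GRing.Theory Num.Theory.
Local Open Scope ring_scope.

(* Finite multisets of reals are represented by sequences (order irrelevant). *)

Definition submultiset (R : realType) (A B : seq R) : Prop :=
  forall x : R, (count_mem x A <= count_mem x B)%N.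

Definition largest (R : realType) (k : nat) (s : seq R) : seq R :=
  take k (sort (fun x y : R => y <= x) s).

From mathcomp Require Import all_boot all_order all_algebra.
From mathcomp Require Import reals.
Import Order.TTheory GRing.Theory Num.Theory.
Local Open Scope ring_scope.

(** The [i]-th largest element of [A] is at most the [i]-th largest element
   of [B], because [B] has at least as many elements [>= y] as [A] for every
   threshold [y].  Hence each factor [1 - h] over the [k] largest elements
   of [B] is at most the corresponding factor over [A_k], and the further
   [l - k] factors lie in [[0, 1]]. *)

Lemma leq_count_of_count_mem {T : eqType} {A B : seq T} (p : pred T) :
  (forall x, count_mem x A <= count_mem x B)%N -> (count p A <= count p B)%N.
Proof.
elim: A B => [|a A IH] B //= le_AB.
have aB : a \in B.
  by rewrite -has_pred1 has_count (leq_trans _ (le_AB a)) //= eqxx.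
rewrite (permP (perm_to_rem aB)) /= leq_add2l; apply: IH => x.
have := le_AB x; rewrite (permP (perm_to_rem aB)) /= eq_sym.
by case: (x == a); rewrite //= !add1n ltnS.
Qed.

Section SortedNonincreasing.
Local Open Scope order_scope.
Context {d : Order.disp_t} {T : orderType d} (x0 : T).

Lemma sorted_ge_count_nth (t : seq T) (y : T) (i : nat) :
  sorted >=%O t -> (i < count (>= y) t)%N -> y <= nth x0 t i.
Proof.
elim: t i => [|a t IH] i // t_sorted.
have a_ge_t := order_path_min ge_trans t_sorted.
case: i => [|i].
  rewrite -has_count => /hasP[z]; rewrite inE => /orP[/eqP -> //|zt yz] /=.
  by apply: le_trans yz _; move/allP: a_ge_t; apply.
move=> /= i_lt; apply: IH; first exact: path_sorted t_sorted.
by move: i_lt; case: (y <= a); rewrite ?add1n ?add0n ?ltnS // => /ltnW.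
Qed.

Lemma sorted_ge_nth_count (t : seq T) (i : nat) :
  sorted >=%O t -> (i < size t)%N -> (i < count (>= nth x0 t i) t)%N.
Proof.
elim: t i => [|a t IH] i //= t_sorted.
have a_ge_t := order_path_min ge_trans t_sorted.
case: i => [|i] /=; first by rewrite lexx.
rewrite ltnS => i_lt.
have -> : nth x0 t i <= a by move/allP: a_ge_t; apply; exact: mem_nth.
by rewrite add1n ltnS; apply: IH => //; exact: path_sorted t_sorted.
Qed.

Lemma le_nth_sort_ge (A B : seq T) (i : nat) :
  (forall x, count_mem x A <= count_mem x B)%N -> (i < size A)%N ->
  nth x0 (sort >=%O A) i <= nth x0 (sort >=%O B) i.
Proof.
move=> le_AB i_lt.
have sorted_sort (s : seq T) : sorted >=%O (sort >=%O s) := sort_sorted ge_total s.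
apply: sorted_ge_count_nth => //; rewrite count_sort.
apply: leq_trans _ (leq_count_of_count_mem _ le_AB); rewrite -(count_sort >=%O).
by apply: sorted_ge_nth_count; rewrite ?size_sort.
Qed.

End SortedNonincreasing.

Section ProductsOverPrefixes.
Context {R : numDomainType} {T : Type} (F : T -> R).

Lemma prod_take_ge (s : seq T) {k l : nat} :
  (forall x, 0 <= F x <= 1) -> (k <= l)%N ->
  \prod_(x <- take l s) F x <= \prod_(x <- take k s) F x.
Proof.
move=> F01 le_kl; rewrite -(subnKC le_kl) takeD big_cat /=.
rewrite ler_piMr ?prodr_ile1 //.
by apply: prodr_ge0 => x _; case/andP: (F01 x).
Qed.

Lemma ler_prod_take (x0 : T) (s t : seq T) (k : nat) :
  (k <= size s)%N -> (k <= size t)%N ->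
  (forall i, (i < k)%N -> 0 <= F (nth x0 s i) <= F (nth x0 t i)) ->
  \prod_(x <- take k s) F x <= \prod_(x <- take k t) F x.
Proof.
move=> ks kt le_st; rewrite !(big_nth x0) !size_takel // !big_mkord.
by apply: ler_prod => i _; rewrite !nth_take //; exact: le_st.
Qed.

End ProductsOverPrefixes.

Theorem lemma5 (R : realType) (h : R -> R)
  (h_mono : {homo h : x y / x <= y})
  (h_range : forall x : R, 0 <= h x <= 1)
  (A B : seq R) (AB : submultiset A B)
  (k l : nat) (hkA : (k <= size A)%N) (hkl : (k <= l)%N) (hlB : (l <= size B)%N) :
  1 - \prod_(r <- largest k A) (1 - h r) <= 1 - \prod_(r <- largest l B) (1 - h r).
Proof.
have factor01 x : 0 <= 1 - h x <= 1.
  by case/andP: (h_range x) => h0 h1; rewrite subr_ge0 h1 gerBl h0.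
have hkB := leq_trans hkl hlB.
rewrite lerD2l lerN2; apply: le_trans (prod_take_ge _ _ factor01 hkl) _.
apply: (ler_prod_take _ 0); rewrite ?size_sort // => i ik.
rewrite (andP (factor01 _)).1 lerB // h_mono //.
exact: le_nth_sort_ge AB (leq_trans ik hkA).
Qed.
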